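(* Let $n,p\ge 1$, let $\tau\in[0,1]$, let $\eta\ge\varepsilon>0$, and let $(Q^\ast,Y^\ast,Z^\ast)$ be an optimal solution of the learner semidefinite program described in the context (for this $\eta$, $\varepsilon$, $\tau$). Fix an index $j\in\{1,\dots,2^p\}$ and, for $(A,B)\in\mathbb{R}^{n\times n}\times\mathbb{R}^{n\times p}$, let $$\Xi(A,B)=\begin{bmatrix}\tau Q^\ast & 0 & M(A,B)^\top\\ 0 & (1-\tau)I & 0\\ M(A,B) & 0 & Q^\ast\end{bmatrix},\qquad M(A,B)=AQ^\ast+BE_jY^\ast+BE_j^-Z^\ast .$$ Then there exists a constant $\ell=\ell(\varepsilon)\ge 0$ such that $$\bigl|\lambda_{\min}(\Xi(A,B))-\lambda_{\min}(\Xi(A+\Delta A,B+\Delta B))\bigr|\le \ell\bigl(\|\Delta A\|_{\mathrm{op}}+\|\Delta B\|_{\mathrm{op}}\bigr)$$ for every $(A,B)\in\Omega$ and every perturbation $(\Delta A,\Delta B)\in\mathbb{R}^{n\times n}\times\mathbb{R}^{n\times p}$.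
   Context: Consider the discrete-time control-affine system $x(t+1)=f(x(t))+g(x(t),\phi(t))u(t)$ with $x\in\mathscr D=\{x\in\mathbb{R}^n: Lx\le \mathbf 1_\ell\}$ ($L\in\mathbb{R}^{\ell\times n}$, $\mathrm{rank}(L)=\ell$, rows $l_i$), $u\in\mathscr U=\{u\in\mathbb{R}^p:|u|\le\bar u\}$ componentwise ($\bar u\in\mathbb{R}^p_+$), $f:\mathbb{R}^n\to\mathbb{R}^n$ and $g:\mathbb{R}^n\times[0,1]^p\to\mathbb{R}^{n\times p}$ of class $C^2$, and fault parameter $\phi\in\Phi=\{\phi\in[0,1]^p:\sum_{i=1}^p\mathds 1(\phi_i=1)\ge p-1\}$. $\Omega$ is the set of pairs $(A,B)$ with $A=\frac{df}{dx}(\bar x)$ and $B=g(\bar x,\bar\phi)$ for some $\bar x\in\mathscr D$, $\bar\phi\in\Phi$; $\Omega$ is assumed bounded (it is compact and connected). $\{E_j\}_{j=1}^{2^p}$ are all $p\times p$ diagonal matrices with entries in $\{0,1\}$, and $E_j^-=I-E_j$. $\|\cdot\|_{\mathrm{op}}$ is the operator norm induced by the Euclidean norm and $\lambda_{\min}$ the smallest eigenvalue of a symmetric matrix. The identity block $(1-\tau)I$ has a fixed dimension. Learner program: given finitely many pairs $(A_i,B_i)\in\Omega$, $i=1,\dots,V$ (the vertices of the convex hull of a finite sample set in $\Omega$), maximize $\mathrm{trace}(Q)$ over symmetric $Q\in\mathbb{R}^{n\times n}$, $Y,Z\in\mathbb{R}^{p\times n}$ subject to: $\begin{bmatrix}\tau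 Q & 0 & (A_iQ+B_iE_jY+B_iE_j^-Z)^\top\\ 0&(1-\tau)I&0\\ A_iQ+B_iE_jY+B_iE_j^-Z&0&Q\end{bmatrix}\succeq\varepsilon I$ for all $i=1,\dots,V$, $j=1,\dots,2^p$; $\begin{bmatrix}1& l_iQ\\ Ql_i^\top & Q\end{bmatrix}\succeq0$ for $i=1,\dots,\ell$; $\begin{bmatrix}\bar u_i^2 & z_i\\ z_i^\top & Q\end{bmatrix}\succeq 0$ for $i=1,\dots,p$, where $z_i$ is the $i$-th row of $Z$; $Q\preceq\eta I$; $Y\in\mathcal Y$, $Z\in\mathcal Z$, where $\mathcal Y,\mathcal Z\subset\mathbb{R}^{p\times n}$ are given nonempty, convex, compact sets. *)

From HB Require Import structures.
From mathcomp Require Import all_boot all_order all_algebra.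
From mathcomp Require Import all_classical all_reals all_analysis.
Set Implicit Arguments. Unset Strict Implicit. Unset Printing Implicit Defensive.
Import Order.TTheory GRing.Theory Num.Theory.
Import numFieldNormedType.Exports.
Local Open Scope classical_set_scope.
Local Open Scope ring_scope.

Section Defs.
Variable R : realType.

Definition enorm k (x : 'cV[R]_k) : R := Num.sqrt (\sum_(i < k) x i 0 ^+ 2).

Definition opnorm a b (M : 'M[R]_(a, b)) : R :=
  sup [set enorm (M *m x) | x in [set x : 'cV[R]_b | enorm x <= 1]].

Definition lambda_min k (M : 'M[R]_k) : R := inf [set a : R | eigenvalue M a].

Definition psd k (M : 'M[R]_k) : Prop :=
  M^T = M /\ forall x : 'cV[R]_k, 0 <= (x^T *m M *m x) 0 0.
Definition loewner_ge k (A B : 'M[R]_k) : Prop := psd (A - B).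

Definition ebasis k (i : 'I_k) : 'cV[R]_k := delta_mx i 0.

Definition C2 k (W : normedModType R) (F : 'cV[R]_k -> W) : Prop :=
  continuous F /\
  (forall i x, derivable F x (ebasis i)) /\
  (forall i, continuous ('D_(ebasis i) F)) /\
  (forall i j x, derivable ('D_(ebasis i) F) x (ebasis j)) /\
  (forall i j, continuous ('D_(ebasis j) ('D_(ebasis i) F))).

Definition jac k (f : 'cV[R]_k -> 'cV[R]_k) (x : 'cV[R]_k) : 'M[R]_k :=
  \matrix_(i, j) ('D_(ebasis j) f x) i 0.

Definition joint n p (g : 'cV[R]_n -> 'cV[R]_p -> 'M[R]_(n, p))
  (z : 'cV[R]_(n + p)) : 'M[R]_(n, p) := g (usubmx z) (dsubmx z).

Definition Dset l n (L : 'M[R]_(l, n)) : set 'cV[R]_n :=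
  [set x | forall i, (L *m x) i 0 <= 1].

Definition Phiset p : set 'cV[R]_p :=
  [set phi : 'cV[R]_p | (forall i, 0 <= phi i 0 <= 1) /\
             (p - 1 <= #|[pred i : 'I_p | phi i ord0 == (1%R : R)]|)%N].

Definition Omega l n p (L : 'M[R]_(l, n)) (f : 'cV[R]_n -> 'cV[R]_n)
  (g : 'cV[R]_n -> 'cV[R]_p -> 'M[R]_(n, p)) : set ('M[R]_n * 'M[R]_(n, p)) :=
  [set AB | exists xb phib, Dset L xb /\ Phiset phib /\
            AB = (jac f xb, g xb phib)].

(* E_j: diagonal 0/1 matrices, indexed by the 0/1 pattern of the diagonal. *)
Definition Emat p (s : {ffun 'I_p -> bool}) : 'M[R]_p :=
  diag_mx (\row_i (s i)%:R).
Definition Emat_c p (s : {ffun 'I_p -> bool}) : 'M[R]_p := 1%:M - Emat s.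

Definition convhull N n p (S : 'I_N -> 'M[R]_n * 'M[R]_(n, p))
  : set ('M[R]_n * 'M[R]_(n, p)) :=
  [set AB | exists w : 'I_N -> R, (forall k, 0 <= w k) /\ \sum_k w k = 1 /\
      AB = (\sum_k w k *: (S k).1, \sum_k w k *: (S k).2)].
Definition is_vertex N n p (S : 'I_N -> 'M[R]_n * 'M[R]_(n, p))
  (AB : 'M[R]_n * 'M[R]_(n, p)) : Prop :=
  convhull S AB /\
  forall (a b : 'M[R]_n * 'M[R]_(n, p)) (t : R), convhull S a -> convhull S b ->
    0 < t < 1 -> AB = (t *: a.1 + (1 - t) *: b.1, t *: a.2 + (1 - t) *: b.2) ->
    a = AB /\ b = AB.

Definition convex_mxset a b (S : set 'M[R]_(a, b)) : Prop :=
  forall x y (t : R), S x -> S y -> 0 <= t <= 1 -> S (t *: x + (1 - t) *: y).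

Definition Xi n m (tau : R) (Q M : 'M[R]_n) : 'M[R]_(n + m + n) :=
  block_mx (block_mx (tau *: Q) 0 0 ((1 - tau)%:M)) (col_mx M^T 0)
           (row_mx M 0) Q.

Definition Mcl n p (A : 'M[R]_n) (B : 'M[R]_(n, p)) (s : {ffun 'I_p -> bool})
  (Q : 'M[R]_n) (Y Z : 'M[R]_(p, n)) : 'M[R]_n :=
  A *m Q + B *m Emat s *m Y + B *m Emat_c s *m Z.

Definition learner_feasible l n p m V (L : 'M[R]_(l, n)) (ubar : 'cV[R]_p)
  (tau eps eta : R) (AB : 'I_V -> 'M[R]_n * 'M[R]_(n, p))
  (Yset Zset : set 'M[R]_(p, n)) (Q : 'M[R]_n) (Y Z : 'M[R]_(p, n)) : Prop :=
  Q^T = Q /\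
  (forall (i : 'I_V) (s : {ffun 'I_p -> bool}),
     loewner_ge (Xi m tau Q (Mcl (AB i).1 (AB i).2 s Q Y Z)) (eps%:M)) /\
  (forall i : 'I_l,
     loewner_ge (block_mx (1%:M : 'M[R]_1) (row i L *m Q)
                          (Q *m (row i L)^T) Q) 0) /\
  (forall i : 'I_p,
     loewner_ge (block_mx ((ubar i 0 ^+ 2)%:M : 'M[R]_1) (row i Z)
                          ((row i Z)^T) Q) 0) /\
  loewner_ge (eta%:M) Q /\
  Yset Y /\ Zset Z.

Definition learner_optimal l n p m V (L : 'M[R]_(l, n)) (ubar : 'cV[R]_p)
  (tau eps eta : R) (AB : 'I_V -> 'M[R]_n * 'M[R]_(n, p))
  (Yset Zset : set 'M[R]_(p, n)) (Q : 'M[R]_n) (Y Z : 'M[R]_(p, n)) : Prop :=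
  learner_feasible m L ubar tau eps eta AB Yset Zset Q Y Z /\
  forall Q' Y' Z', learner_feasible m L ubar tau eps eta AB Yset Zset Q' Y' Z' ->
    \tr Q' <= \tr Q.

End Defs.

From HB Require Import structures.
From mathcomp Require Import all_boot all_order all_algebra.
From mathcomp Require Import all_classical all_reals all_analysis.
From mathcomp Require Import ring lra.
Import Order.TTheory GRing.Theory Num.Theory.
Import numFieldNormedType.Exports.
Local Open Scope classical_set_scope.
Local Open Scope ring_scope.

Set Implicit Arguments. Unset Strict Implicit. Unset Printing Implicit Defensive.

(* For a symmetric matrix X the smallest eigenvalue is the infimum mu of the
   Rayleigh quotient x^T X x / |x|^2: X - mu I is positive semidefinite, and a
   positive semidefinite invertible matrix is coercive, so X - mu I must be
   singular.  Hence lambda_min moves by at most kap whenever the quadratic form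
   moves by at most kap |x|^2.  Perturbing (A, B) by (dA, dB) adds
   D = dA Q* + dB W, with W = E_j Y* + E_j^- Z*, to the off-diagonal block of Xi,
   which changes the quadratic form of Xi at x = (x1, x2, x3) by 2 x3^T D x1, at
   most (||dA|| ||Q*|| + ||dB|| ||W||) |x|^2.  So ell = ||Q*|| + ||W|| works; of
   the learner program only the symmetry of Q* is needed. *)

Section EuclideanSpace.
Variable R : realType.

Definition dotc k (x y : 'cV[R]_k) : R := (x^T *m y) 0 0.
Definition sqnorm k (x : 'cV[R]_k) : R := \sum_(i < k) x i 0 ^+ 2.
Definition frobenius2 a b (M : 'M[R]_(a, b)) : R :=
  \sum_(i < a) \sum_(j < b) M i j ^+ 2.

Lemma dotcE k (x y : 'cV[R]_k) : dotc x y = \sum_i x i 0 * y i 0.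
Proof. by rewrite /dotc mxE; apply: eq_bigr => i _; rewrite mxE. Qed.

Lemma dotcC k (x y : 'cV[R]_k) : dotc x y = dotc y x.
Proof. by rewrite !dotcE; apply: eq_bigr => i _; rewrite mulrC. Qed.

Lemma dotcDr k (x y z : 'cV[R]_k) : dotc x (y + z) = dotc x y + dotc x z.
Proof. by rewrite /dotc mulmxDr mxE. Qed.

Lemma dotcNr k (x y : 'cV[R]_k) : dotc x (- y) = - dotc x y.
Proof. by rewrite /dotc mulmxN mxE. Qed.

Lemma dotcZr k c (x y : 'cV[R]_k) : dotc x (c *: y) = c * dotc x y.
Proof. by rewrite /dotc -scalemxAr mxE. Qed.

Lemma dotcDl k (x y z : 'cV[R]_k) : dotc (x + y) z = dotc x z + dotc y z.
Proof. by rewrite dotcC dotcDr !(dotcC z). Qed.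

Lemma dotcNl k (x y : 'cV[R]_k) : dotc (- x) y = - dotc x y.
Proof. by rewrite dotcC dotcNr dotcC. Qed.

Lemma dotcZl k c (x y : 'cV[R]_k) : dotc (c *: x) y = c * dotc x y.
Proof. by rewrite dotcC dotcZr dotcC. Qed.

Lemma dotc_mulmx k (x z : 'cV[R]_k) (M : 'M[R]_k) :
  dotc x (M *m z) = dotc (M^T *m x) z.
Proof. by rewrite /dotc trmx_mul trmxK mulmxA. Qed.

Lemma dotc_col k1 k2 (x z : 'cV[R]_k1) (y w : 'cV[R]_k2) :
  dotc (col_mx x y) (col_mx z w) = dotc x z + dotc y w.
Proof. by rewrite /dotc tr_col_mx mul_row_col mxE. Qed.

Lemma dotcc k (x : 'cV[R]_k) : dotc x x = sqnorm x.
Proof. by rewrite dotcE; apply: eq_bigr => i _; rewrite expr2. Qed.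

Lemma sqnorm_ge0 k (x : 'cV[R]_k) : 0 <= sqnorm x.
Proof. by apply: sumr_ge0 => i _; rewrite sqr_ge0. Qed.

Lemma sqnorm_gt0 k (x : 'cV[R]_k) : x != 0 -> 0 < sqnorm x.
Proof.
move=> xn0; rewrite lt_def sqnorm_ge0 andbT; apply: contra xn0 => /eqP x0.
apply/eqP/matrixP => i j; rewrite ord1 mxE.
have /eqP := psumr_eq0P (fun i _ => sqr_ge0 (x i 0)) x0 (i := i) isT.
by rewrite sqrf_eq0 => /eqP.
Qed.

Lemma sqnorm0 k : sqnorm (0 : 'cV[R]_k) = 0.
Proof. by rewrite /sqnorm big1 // => i _; rewrite mxE expr0n. Qed.

Lemma sqnormZ k c (x : 'cV[R]_k) : sqnorm (c *: x) = c ^+ 2 * sqnorm x.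
Proof. by rewrite /sqnorm mulr_sumr; apply: eq_bigr => i _; rewrite mxE exprMn. Qed.

Lemma sqnorm_col k1 k2 (x : 'cV[R]_k1) (y : 'cV[R]_k2) :
  sqnorm (col_mx x y) = sqnorm x + sqnorm y.
Proof.
rewrite /sqnorm big_split_ord /=.
by congr (_ + _); apply: eq_bigr => i _; rewrite ?col_mxEu ?col_mxEd.
Qed.

Lemma frobenius2_ge0 a b (M : 'M[R]_(a, b)) : 0 <= frobenius2 M.
Proof. by apply: sumr_ge0 => i _; apply: sumr_ge0 => j _; rewrite sqr_ge0. Qed.

Lemma enorm_ge0 k (x : 'cV[R]_k) : 0 <= enorm x.
Proof. exact: sqrtr_ge0. Qed.

Lemma sqr_enorm k (x : 'cV[R]_k) : enorm x ^+ 2 = sqnorm x.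
Proof. by rewrite sqr_sqrtr // sqnorm_ge0. Qed.

Lemma enorm0 k : enorm (0 : 'cV[R]_k) = 0.
Proof. by rewrite /enorm -/(sqnorm 0) sqnorm0 sqrtr0. Qed.

Lemma enormZ k c (x : 'cV[R]_k) : enorm (c *: x) = `|c| * enorm x.
Proof. by rewrite /enorm -!/(sqnorm _) sqnormZ sqrtrM ?sqr_ge0 // sqrtr_sqr. Qed.

(* Lagrange's identity: the gap is half the double sum of (a_i x_j - a_j x_i)^2. *)
Lemma cauchy_schwarz_sum k (a x : 'I_k -> R) :
  (\sum_i a i * x i) ^+ 2 <= (\sum_i a i ^+ 2) * (\sum_i x i ^+ 2).
Proof.
have -> : (\sum_i a i * x i) ^+ 2 = \sum_i \sum_j (a i * x i) * (a j * x j).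
  by rewrite expr2 mulr_suml; apply: eq_bigr => i _; rewrite mulr_sumr.
have -> : (\sum_i a i ^+ 2) * (\sum_i x i ^+ 2) = \sum_i \sum_j a i ^+ 2 * x j ^+ 2.
  by rewrite mulr_suml; apply: eq_bigr => i _; rewrite mulr_sumr.
have lagrange : \sum_i \sum_j (a i * x j - a j * x i) ^+ 2 =
    \sum_i \sum_j a i ^+ 2 * x j ^+ 2 + \sum_i \sum_j a j ^+ 2 * x i ^+ 2
    - 2 * \sum_i \sum_j (a i * x i) * (a j * x j).
  rewrite mulr_sumr -big_split -sumrB; apply: eq_bigr => i _.
  by rewrite mulr_sumr -big_split -sumrB; apply: eq_bigr => j _ /=; ring.
have sym : \sum_i \sum_j a j ^+ 2 * x i ^+ 2 = \sum_i \sum_j a i ^+ 2 * x j ^+ 2.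
  by rewrite exchange_big.
have : 0 <= \sum_i \sum_j (a i * x j - a j * x i) ^+ 2.
  by apply: sumr_ge0 => i _; apply: sumr_ge0 => j _; rewrite sqr_ge0.
by rewrite lagrange sym; lra.
Qed.

Lemma dotc_norm_le k (x y : 'cV[R]_k) : `|dotc x y| <= enorm x * enorm y.
Proof.
rewrite -sqrtrM ?sqnorm_ge0 // -sqrtr_sqr ler_sqrt ?mulr_ge0 ?sqnorm_ge0 //.
by rewrite dotcE; apply: cauchy_schwarz_sum.
Qed.

Lemma sqnorm_mulmx_le a b (M : 'M[R]_(a, b)) (x : 'cV[R]_b) :
  sqnorm (M *m x) <= frobenius2 M * sqnorm x.
Proof.
rewrite /sqnorm /frobenius2 mulr_suml; apply: ler_sum => i _.
by rewrite mxE; apply: cauchy_schwarz_sum.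
Qed.

Lemma enorm_mulmx_le a b (M : 'M[R]_(a, b)) (x : 'cV[R]_b) :
  enorm (M *m x) <= Num.sqrt (frobenius2 M) * enorm x.
Proof.
rewrite -sqrtrM ?frobenius2_ge0 // ler_sqrt ?mulr_ge0 ?sqnorm_ge0 ?frobenius2_ge0 //.
exact: sqnorm_mulmx_le.
Qed.

Lemma enormD_le k (x y : 'cV[R]_k) : enorm (x + y) <= enorm x + enorm y.
Proof.
rewrite -(ler_pXn2r (n := 2)) ?nnegrE ?addr_ge0 ?enorm_ge0 //.
rewrite sqr_enorm -dotcc dotcDl !dotcDr !dotcc (dotcC y) sqrrD !sqr_enorm.
have := dotc_norm_le x y; rewrite ler_norml => /andP[_]; lra.
Qed.

Lemma mul2_enorm_le k1 k2 (x : 'cV[R]_k1) (y : 'cV[R]_k2) :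
  2 * (enorm x * enorm y) <= sqnorm x + sqnorm y.
Proof.
rewrite -!sqr_enorm; have := sqr_ge0 (enorm x - enorm y).
by rewrite sqrrB; lra.
Qed.

End EuclideanSpace.

Section OperatorNorm.
Variable R : realType.

Lemma opnorm_has_ubound a b (M : 'M[R]_(a, b)) :
  has_ubound [set enorm (M *m x) | x in [set x : 'cV[R]_b | enorm x <= 1]].
Proof.
exists (Num.sqrt (frobenius2 M)) => _ [x /= x1 <-].
apply: le_trans (enorm_mulmx_le M x) _.
by rewrite -[leRHS]mulr1 ler_wpM2l // sqrtr_ge0.
Qed.

Lemma opnorm_ge0 a b (M : 'M[R]_(a, b)) : 0 <= opnorm M.
Proof.
apply: (ub_le_sup (opnorm_has_ubound M)).
by exists 0; rewrite /= ?mulmx0 enorm0 ?ler01.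
Qed.

Lemma enorm_mulmx_le_opnorm a b (M : 'M[R]_(a, b)) (x : 'cV[R]_b) :
  enorm (M *m x) <= opnorm M * enorm x.
Proof.
have [->|xn0] := eqVneq x 0; first by rewrite mulmx0 !enorm0 mulr0.
have x_gt0 : 0 < enorm x by rewrite sqrtr_gt0 sqnorm_gt0.
have unit_le : enorm (M *m ((enorm x)^-1 *: x)) <= opnorm M.
  apply: (ub_le_sup (opnorm_has_ubound M)); exists ((enorm x)^-1 *: x) => //=.
  by rewrite enormZ ger0_norm ?invr_ge0 ?enorm_ge0 // mulVf ?gt_eqF.
rewrite -ler_pdivrMr // mulrC -[_^-1]ger0_norm ?invr_ge0 ?enorm_ge0 //.
by rewrite -enormZ scalemxAr.
Qed.

End OperatorNorm.

Section Rayleigh.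
Variable R : realType.

Definition qform k (X : 'M[R]_k) (x : 'cV[R]_k) : R := dotc x (X *m x).

Lemma qformE k (X : 'M[R]_k) x : qform X x = (x^T *m X *m x) 0 0.
Proof. by rewrite /qform /dotc mulmxA. Qed.

Definition rayleigh_quotients k (X : 'M[R]_k) : set R :=
  [set qform X x / sqnorm x | x in [set x : 'cV[R]_k | x != 0]].

Definition rayleigh_inf k (X : 'M[R]_k) : R := inf (rayleigh_quotients X).

Lemma qform_norm_le k (X : 'M[R]_k) x :
  `|qform X x| <= Num.sqrt (frobenius2 X) * sqnorm x.
Proof.
apply: le_trans (dotc_norm_le _ _) _.
apply: le_trans (ler_wpM2l (enorm_ge0 x) (enorm_mulmx_le X x)) _.
by rewrite mulrCA -expr2 sqr_enorm.
Qed.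

Lemma qform_subr_scalar k (X : 'M[R]_k) c x :
  qform (X - c%:M) x = qform X x - c * sqnorm x.
Proof. by rewrite /qform mulmxBl mul_scalar_mx dotcDr dotcNr dotcZr dotcc. Qed.

Lemma rayleigh_quotients_has_lbound k (X : 'M[R]_k) :
  has_lbound (rayleigh_quotients X).
Proof.
exists (- Num.sqrt (frobenius2 X)) => _ [x /= xn0 <-].
rewrite ler_pdivlMr ?sqnorm_gt0 // mulNr.
by have := qform_norm_le X x; rewrite ler_norml => /andP[].
Qed.

Lemma rayleigh_quotients_neq0 k (X : 'M[R]_k) :
  (0 < k)%N -> rayleigh_quotients X !=set0.
Proof.
move=> k_gt0; have e_neq0 : const_mx 1 != 0 :> 'cV[R]_k.
  by apply/eqP => /matrixP /(_ (Ordinal k_gt0) 0); rewrite !mxE => /eqP; rewrite oner_eq0.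
by eexists; exists (const_mx 1).
Qed.

Lemma rayleigh_inf_le k (X : 'M[R]_k) x :
  x != 0 -> rayleigh_inf X <= qform X x / sqnorm x.
Proof. by move=> xn0; apply: (ge_inf (rayleigh_quotients_has_lbound X)); exists x. Qed.

Lemma rayleigh_inf_ge k (X : 'M[R]_k) c : (0 < k)%N ->
  (forall x, x != 0 -> c <= qform X x / sqnorm x) -> c <= rayleigh_inf X.
Proof.
move=> k_gt0 Hc; apply: lb_le_inf; first exact: rayleigh_quotients_neq0.
by move=> _ [x /= xn0 <-]; apply: Hc.
Qed.

Lemma rayleigh_inf_mul_le k (X : 'M[R]_k) x :
  rayleigh_inf X * sqnorm x <= qform X x.
Proof.
have [->|xn0] := eqVneq x 0.
  by rewrite sqnorm0 mulr0 /qform /dotc !mulmx0 mxE.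
by rewrite -ler_pdivlMr ?sqnorm_gt0 ?rayleigh_inf_le.
Qed.

Lemma rayleigh_inf_le_eigenvalue k (X : 'M[R]_k) a :
  eigenvalue X a -> rayleigh_inf X <= a.
Proof.
case/eigenvalueP => v vX vn0; have xn0 : v^T != 0 by rewrite trmx_eq0.
suff <- : qform X v^T / sqnorm v^T = a by apply: rayleigh_inf_le.
rewrite /qform dotc_mulmx -trmx_mul vX linearZ /= dotcZl dotcc.
by rewrite mulfK // gt_eqF ?sqnorm_gt0.
Qed.

Lemma psd_sqnorm_mulmx_le k (Y : 'M[R]_k) x : psd Y ->
  sqnorm (Y *m x) <= (Num.sqrt (frobenius2 Y) + 1) * qform Y x.
Proof.
(* Expand 0 <= qform Y (x - t Y x) with t = 1 / c. *)
case=> Ysym Ypsd; set c := _ + 1; pose t := c^-1.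
have c_gt0 : 0 < c by rewrite ltr_wpDl // sqrtr_ge0.
have tc : t * c = 1 by rewrite mulVf // gt_eqF.
have qYx_le : qform Y (Y *m x) <= c * sqnorm (Y *m x).
  apply: le_trans (ler_norm _) _; apply: le_trans (qform_norm_le _ _) _.
  by rewrite ler_wpM2r ?sqnorm_ge0 // lerDl.
have : 0 <= qform Y (x - t *: (Y *m x)) by rewrite qformE.
have -> : qform Y (x - t *: (Y *m x)) =
    qform Y x - 2 * t * sqnorm (Y *m x) + t ^+ 2 * qform Y (Y *m x).
  rewrite /qform mulmxBr -scalemxAr dotcDr dotcNr dotcZr !dotcDl !dotcNl !dotcZl.
  by rewrite (dotcc (Y *m x)) (dotc_mulmx x (Y *m x)) Ysym (dotcc (Y *m x)); ring.
have : t ^+ 2 * qform Y (Y *m x) <= t * sqnorm (Y *m x).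
  apply: le_trans (ler_wpM2l (sqr_ge0 t) qYx_le) _.
  by rewrite expr2 -mulrA (mulrA t c) tc mul1r.
move=> h1 h2; have : t * sqnorm (Y *m x) <= qform Y x by lra.
by rewrite -(ler_pM2l c_gt0) mulrA (mulrC c) tc mul1r.
Qed.

Lemma psd_unitmx_coercive k (Y : 'M[R]_k) : psd Y -> Y \in unitmx ->
  exists2 d, 0 < d & forall x, sqnorm x <= d * qform Y x.
Proof.
move=> Ypsd Yunit; pose d := frobenius2 (invmx Y) * (Num.sqrt (frobenius2 Y) + 1) + 1.
exists d; first by rewrite ltr_wpDl // mulr_ge0 ?frobenius2_ge0 ?addr_ge0 ?sqrtr_ge0.
move=> x; have q_ge0 : 0 <= qform Y x by rewrite qformE; case: Ypsd.
rewrite -{1}(mulKmx Yunit x); apply: le_trans (sqnorm_mulmx_le _ _) _.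
apply: le_trans (ler_wpM2l (frobenius2_ge0 _) (psd_sqnorm_mulmx_le x Ypsd)) _.
by rewrite mulrA ler_wpM2r // lerDl.
Qed.

Lemma psd_sub_rayleigh_inf k (X : 'M[R]_k) :
  X^T = X -> psd (X - (rayleigh_inf X)%:M).
Proof.
move=> Xsym; split; first by rewrite linearB /= Xsym tr_scalar_mx.
by move=> x; rewrite -qformE qform_subr_scalar subr_ge0 rayleigh_inf_mul_le.
Qed.

Lemma eigenvalue_rayleigh_inf k (X : 'M[R]_k) :
  X^T = X -> (0 < k)%N -> eigenvalue X (rayleigh_inf X).
Proof.
move=> Xsym k_gt0; rewrite /eigenvalue /eigenspace kermx_eq0 row_free_unit.
apply/negP => /(psd_unitmx_coercive (psd_sub_rayleigh_inf Xsym)) [d d_gt0 Hd].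
suff : rayleigh_inf X + d^-1 <= rayleigh_inf X by rewrite gerDl leNgt invr_gt0 d_gt0.
apply: rayleigh_inf_ge => // x xn0; have x_gt0 := sqnorm_gt0 xn0.
rewrite ler_pdivlMr // mulrDl -(ler_pM2l d_gt0) mulrDr mulVKf ?gt_eqF //.
by have := Hd x; rewrite qform_subr_scalar mulrBr; lra.
Qed.

Lemma lambda_min_rayleigh_inf k (X : 'M[R]_k) :
  X^T = X -> (0 < k)%N -> lambda_min X = rayleigh_inf X.
Proof.
move=> Xsym k_gt0; have eig := eigenvalue_rayleigh_inf Xsym k_gt0.
have lb : lbound [set a | eigenvalue X a] (rayleigh_inf X).
  by move=> a /rayleigh_inf_le_eigenvalue.
apply/le_anti/andP; split; first exact: (ge_inf (ex_intro _ _ lb)).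
by apply: lb_le_inf => //; exists (rayleigh_inf X).
Qed.

Lemma rayleigh_inf_lipschitz k (X X' : 'M[R]_k) kap : (0 < k)%N ->
  (forall x, `|qform X' x - qform X x| <= kap * sqnorm x) ->
  `|rayleigh_inf X - rayleigh_inf X'| <= kap.
Proof.
move=> k_gt0.
have half (X1 X2 : 'M[R]_k) : (forall x, `|qform X2 x - qform X1 x| <= kap * sqnorm x) ->
    rayleigh_inf X1 - kap <= rayleigh_inf X2.
  move=> H12; apply: rayleigh_inf_ge => // x xn0; have x_gt0 := sqnorm_gt0 xn0.
  have := rayleigh_inf_le X1 xn0; have := H12 x; rewrite ler_norml => /andP[h _].
  rewrite !ler_pdivlMr // mulrBl; lra.
move=> H; have h1 := half _ _ H.
have h2 : rayleigh_inf X' - kap <= rayleigh_inf X by apply: half => x; rewrite distrC.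
by rewrite ler_norml; apply/andP; split; lra.
Qed.

End Rayleigh.

Section LearnerBlockMatrix.
Variable R : realType.

Lemma tr_Xi n m tau (Q M : 'M[R]_n) : Q^T = Q -> (Xi m tau Q M)^T = Xi m tau Q M.
Proof.
move=> Qsym; rewrite /Xi !tr_block_mx tr_col_mx tr_row_mx trmxK !trmx0.
by rewrite tr_scalar_mx linearZ /= Qsym.
Qed.

Lemma qform_Xi n m tau (Q M : 'M[R]_n) x1 (x2 : 'cV[R]_m) x3 :
  qform (Xi m tau Q M) (col_mx (col_mx x1 x2) x3) =
  tau * qform Q x1 + (1 - tau) * sqnorm x2 + 2 * dotc x3 (M *m x1) + qform Q x3.
Proof.
rewrite /qform /Xi !mul_block_col !mul_col_mx !mul_row_col !mul0mx !addr0 !add0r.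
rewrite add_col_mx addr0 !dotc_col !dotcDr mul_scalar_mx -scalemxAl !dotcZr dotcc.
by rewrite (dotc_mulmx x1 x3) trmxK (dotcC _ x3); ring.
Qed.

Lemma lambda_min_Xi_lipschitz n m tau (Q M D : 'M[R]_n) kap :
  Q^T = Q -> (0 < n)%N -> 0 <= kap ->
  (forall x, enorm (D *m x) <= kap * enorm x) ->
  `|lambda_min (Xi m tau Q M) - lambda_min (Xi m tau Q (M + D))| <= kap.
Proof.
move=> Qsym n_gt0 kap_ge0 HD.
have k_gt0 : (0 < n + m + n)%N by rewrite addn_gt0 n_gt0 orbT.
rewrite !lambda_min_rayleigh_inf ?tr_Xi //; apply: rayleigh_inf_lipschitz => // x.
rewrite -[x]vsubmxK -[usubmx x]vsubmxK !qform_Xi !sqnorm_col.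
set x1 := usubmx (usubmx x); set x2 := dsubmx (usubmx x); set x3 := dsubmx x.
rewrite mulmxDl dotcDr.
have -> : forall a b c d e : R, a + b + 2 * (c + d) + e - (a + b + 2 * c + e) = 2 * d.
  by move=> *; ring.
have cross : `|dotc x3 (D *m x1)| <= kap * (enorm x3 * enorm x1).
  apply: le_trans (dotc_norm_le _ _) _.
  by rewrite mulrCA ler_wpM2l ?enorm_ge0 ?HD.
have amgm := ler_wpM2l kap_ge0 (mul2_enorm_le x3 x1).
have x2_term : 0 <= kap * sqnorm x2 by rewrite mulr_ge0 ?sqnorm_ge0.
rewrite normrM ger0_norm // !mulrDr.
rewrite mulrDr mulrCA in amgm; lra.
Qed.

Lemma MclE n p (A : 'M[R]_n) (B : 'M[R]_(n, p)) s Q (Y Z : 'M[R]_(p, n)) :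
  Mcl A B s Q Y Z = A *m Q + B *m (Emat R s *m Y + Emat_c R s *m Z).
Proof. by rewrite /Mcl mulmxDr !mulmxA addrA. Qed.

Lemma MclD n p (A dA : 'M[R]_n) (B dB : 'M[R]_(n, p)) s Q (Y Z : 'M[R]_(p, n)) :
  Mcl (A + dA) (B + dB) s Q Y Z =
  Mcl A B s Q Y Z + (dA *m Q + dB *m (Emat R s *m Y + Emat_c R s *m Z)).
Proof. by rewrite !MclE !mulmxDl addrACA. Qed.

End LearnerBlockMatrix.

Unset Implicit Arguments.

Theorem theorem1 (R : realType) (n p l m N V : nat)
  (hn : (1 <= n)%N) (hp : (1 <= p)%N)
  (L : 'M[R]_(l, n)) (hL : \rank L = l)
  (ubar : 'cV[R]_p) (hubar : forall i, 0 <= ubar i 0)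
  (f : 'cV[R]_n -> 'cV[R]_n) (g : 'cV[R]_n -> 'cV[R]_p -> 'M[R]_(n, p))
  (hf : C2 f) (hg : C2 (joint g))
  (hOmega : bounded_set (Omega L f g))
  (tau eps eta : R) (htau : 0 <= tau <= 1) (heps : 0 < eps) (heta : eps <= eta)
  (S : 'I_N -> 'M[R]_n * 'M[R]_(n, p)) (hS : forall k, Omega L f g (S k))
  (AB : 'I_V -> 'M[R]_n * 'M[R]_(n, p))
  (hAB : forall i, is_vertex S (AB i))
  (hABall : forall v, is_vertex S v -> exists i, AB i = v)
  (Yset Zset : set 'M[R]_(p, n))
  (hY0 : Yset !=set0) (hYc : convex_mxset Yset) (hYk : compact Yset)
  (hZ0 : Zset !=set0) (hZc : convex_mxset Zset) (hZk : compact Zset)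
  (Qs : 'M[R]_n) (Ys Zs : 'M[R]_(p, n))
  (hopt : learner_optimal m L ubar tau eps eta AB Yset Zset Qs Ys Zs)
  (j : {ffun 'I_p -> bool}) :
  exists ell : R, 0 <= ell /\
    forall (A : 'M[R]_n) (B : 'M[R]_(n, p)), Omega L f g (A, B) ->
    forall (dA : 'M[R]_n) (dB : 'M[R]_(n, p)),
      `| lambda_min (Xi m tau Qs (Mcl A B j Qs Ys Zs))
         - lambda_min (Xi m tau Qs (Mcl (A + dA) (B + dB) j Qs Ys Zs)) |
      <= ell * (opnorm dA + opnorm dB).
Proof.
case: hopt => [[Qsym _] _].
set W := Emat R j *m Ys + Emat_c R j *m Zs.
exists (opnorm Qs + opnorm W); split; first by rewrite addr_ge0 ?opnorm_ge0.
move=> A B _ dA dB; rewrite MclD -/W.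
have nA := opnorm_ge0 dA; have nB := opnorm_ge0 dB.
have nQ := opnorm_ge0 Qs; have nW := opnorm_ge0 W.
set kap := opnorm dA * opnorm Qs + opnorm dB * opnorm W.
have kap_ge0 : 0 <= kap by rewrite addr_ge0 ?mulr_ge0.
apply: le_trans
  (lambda_min_Xi_lipschitz (D := dA *m Qs + dB *m W) _ _ _ Qsym hn kap_ge0 _) _.
  move=> x; rewrite mulmxDl -!mulmxA /kap mulrDl.
  apply: le_trans (enormD_le _ _) _.
  by apply: lerD; apply: le_trans (enorm_mulmx_le_opnorm _ _) _;
    rewrite -mulrA ler_wpM2l ?enorm_mulmx_le_opnorm.
rewrite /kap mulrDl !mulrDr (mulrC (opnorm dA)) (mulrC (opnorm dB)).
have : 0 <= opnorm Qs * opnorm dB + opnorm W * opnorm dA.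
  by rewrite addr_ge0 ?mulr_ge0.
lra.
Qed.
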